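(* Let $\varphi:\mathbb{R}^n\to(-\infty,\infty]$ be continuously prox-regular at $\bar x$ for $\bar v=0$ and satisfy $\varphi(x)\ge\varphi(\bar x)-\frac\rho2\|x-\bar x\|^2$ for all $x$ for some $\rho\ge0$, and let $\bar x$ be a tilt-stable local minimizer of $\varphi$ with modulus $\kappa>0$. Then for every sufficiently small $r>0$, $\bar x$ is a tilt-stable local minimizer of the Moreau envelope $e_r\varphi$ with modulus $\kappa+2r$.
   Context: Moreau envelope: $e_r\varphi(x)=\inf_w\{\varphi(w)+\frac1{2r}\|w-x\|^2\}$. Limiting subdifferential $\partial\varphi(\bar x)=\{v:(v,-1)\in N_{\operatorname{epi}\varphi}(\bar x,\varphi(\bar x))\}$, where $N_\Omega(\bar x)$ is the set of all limits of $v_k\in\widehat N_\Omega(x_k)$, $x_k\to\bar x$ in $\Omega$, and $\widehat N_\Omega(\bar x)=\{v:\limsup_{x\to\bar x,x\in\Omega}\langle v,x-\bar x\rangle/\|x-\bar x\|\le0\}$. Continuously prox-regular at $\bar x$ for $\bar v\in\partial\varphi(\bar x)$: $\varphi(\bar x)$ finite, $\varphi$ l.s.c. around $\bar x$, there are $\varepsilon>0,\rho'\ge0$ with $\varphi(x)\ge\varphi(u)+\langle v,x-u\rangle-\frac{\rho'}2\|x-u\|^2$ for all $x\in\mathbb B_\varepsilon(\bar x)$, $(u,v)\in\operatorname{gph}\partial\varphi\cap\mathbb B_\varepsilon(\bar x,\bar v)$, and $(x_k,v_k)\to(\bar x,\bar v)$ with $v_k\in\partial\varphi(x_k)$ implies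 $\varphi(x_k)\to\varphi(\bar x)$. $\bar x$ is a tilt-stable local minimizer of a function $\phi$ with modulus $\kappa$ if for some $\gamma>0$ the mapping $M_\gamma(v)=\operatorname{argmin}\{\phi(x)-\langle v,x\rangle:x\in\mathbb B_\gamma(\bar x)\}$ is single-valued and Lipschitz with constant $\kappa$ on a neighborhood of $0$, with $M_\gamma(0)=\{\bar x\}$. *)

From HB Require Import structures.
From mathcomp Require Import all_boot all_order all_algebra.
From mathcomp Require Import all_classical all_reals.
From mathcomp Require Import ereal topology.
Set Implicit Arguments. Unset Strict Implicit. Unset Printing Implicit Defensive.
Import Order.TTheory GRing.Theory Num.Theory.
Local Open Scope classical_set_scope.
Local Open Scope ring_scope.

Section Defs.
Variables (R : realType) (n : nat).
Local Notation vec := 'rV[R]_n.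

Definition dot (u v : vec) : R := \sum_(i < n) u ord0 i * v ord0 i.
Definition enorm (u : vec) : R := Num.sqrt (dot u u).

(* Euclidean inner product / norm on R^n x R (the space containing epigraphs) *)
Definition pdot (p q : vec * R) : R := dot p.1 q.1 + p.2 * q.2.
Definition pnorm (p : vec * R) : R := Num.sqrt (pdot p p).
Definition psub (p q : vec * R) : vec * R := (p.1 - q.1, p.2 - q.2).

Definition vconv (x : nat -> vec) (l : vec) : Prop :=
  forall e : R, 0 < e -> exists N : nat, forall k, (N <= k)%N -> enorm (x k - l) < e.
Definition pconv (x : nat -> vec * R) (l : vec * R) : Prop :=
  forall e : R, 0 < e -> exists N : nat, forall k, (N <= k)%N -> pnorm (psub (x k) l) < e.

(* Frechet (regular) normal cone: limsup_{x -> xb, x in Om} <v,x-xb>/|x-xb| <= 0 *)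
Definition reg_normal (Om : set (vec * R)) (xb : vec * R) (v : vec * R) : Prop :=
  forall e : R, 0 < e -> exists d : R, 0 < d /\
    forall x, Om x -> 0 < pnorm (psub x xb) < d ->
      pdot v (psub x xb) <= e * pnorm (psub x xb).

Definition lim_normal (Om : set (vec * R)) (xb : vec * R) (v : vec * R) : Prop :=
  Om xb /\
  exists (x vk : nat -> vec * R), (forall k, Om (x k)) /\ pconv x xb /\
    (forall k, reg_normal Om (x k) (vk k)) /\ pconv vk v.

Definition epi (phi : vec -> \bar R) : set (vec * R) :=
  [set p | (phi p.1 <= p.2%:E)%E].

Definition subdiff (phi : vec -> \bar R) (x : vec) (v : vec) : Prop :=
  phi x \is a fin_num /\ lim_normal (epi phi) (x, fine (phi x)) (v, -1).

Definition lsc_at (phi : vec -> \bar R) (x : vec) : Prop :=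
  forall a : R, (a%:E < phi x)%E ->
    exists d : R, 0 < d /\ forall y, enorm (y - x) < d -> (a%:E < phi y)%E.

Definition cont_prox_regular (phi : vec -> \bar R) (xb vb : vec) : Prop :=
  [/\ phi xb \is a fin_num,
      subdiff phi xb vb,
      (exists e : R, 0 < e /\ forall x, enorm (x - xb) < e -> lsc_at phi x),
      (exists e rho' : R, 0 < e /\ 0 <= rho' /\
         forall x u v, enorm (x - xb) <= e -> subdiff phi u v ->
           enorm (u - xb) ^+ 2 + enorm (v - vb) ^+ 2 <= e ^+ 2 ->
           (phi x >= phi u + (dot v (x - u) - rho' / 2 * enorm (x - u) ^+ 2)%:E)%E)
    & (forall (xk vk : nat -> vec), (forall k, subdiff phi (xk k) (vk k)) ->
         vconv xk xb -> vconv vk vb ->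
         (fun k => phi (xk k)) @ \oo --> phi xb)].

Definition tilt_argmin (phi : vec -> \bar R) (xb : vec) (g : R) (v : vec) : set vec :=
  [set x | enorm (x - xb) <= g /\
     forall y, enorm (y - xb) <= g ->
       (phi x - (dot v x)%:E <= phi y - (dot v y)%:E)%E].

Definition tilt_stable (phi : vec -> \bar R) (xb : vec) (kappa : R) : Prop :=
  exists g : R, 0 < g /\ exists d : R, 0 < d /\ exists m : vec -> vec,
    (forall v, enorm v < d -> tilt_argmin phi xb g v = [set m v]) /\
    (forall v1 v2, enorm v1 < d -> enorm v2 < d ->
        enorm (m v1 - m v2) <= kappa * enorm (v1 - v2)) /\
    tilt_argmin phi xb g 0 = [set xb].

Definition moreau (phi : vec -> \bar R) (r : R) (x : vec) : \bar R :=
  ereal_inf [set (phi w + ((2 * r)^-1 * enorm (w - x) ^+ 2)%:E)%E | w in [set: vec]].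

End Defs.

(* Fix a tilt v and write f_v := phi - <v,.>.  Completing the square in the
   definition of the Moreau envelope gives, for every x,
     e_r phi (x) - <v,x> = inf_w [f_v(w) + (2r)^-1 |x - r v - w|^2] - r/2 |v|^2,
   i.e. up to a constant the tilted envelope at x is the proximal value of f_v
   at the shifted point x - r v.  Let m(v) be the unique minimizer of f_v on
   the ball B_gam(xb) given by tilt stability, with minimal value c.  If
   x - r v lies in B_(gam/2)(xb), the infimum above is at least c: inside the
   ball f_v >= c, and outside it the quadratic minorization
   phi >= phi(xb) - rho/2 |. - xb|^2 is dominated by the proximal term as soon
   as 8 rho r <= 1 and r |v| <= gam/32.  The value c is attained at
   x = m(v) + r v, while every other x gives a strictly larger value, by
   uniqueness of m(v) and lower semicontinuity of phi at x - r v.  Hence the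
   tilted argmin map of e_r phi is v |-> m(v) + r v, which is Lipschitz with
   constant kappa + r. *)

From HB Require Import structures.
From mathcomp Require Import all_boot all_order all_algebra.
From mathcomp Require Import all_classical all_reals.
From mathcomp Require Import ereal topology.
From mathcomp Require Import ring lra.
Import Order.TTheory GRing.Theory Num.Theory.
Set Implicit Arguments. Unset Strict Implicit.
Local Open Scope ring_scope.

Section Euclidean.
Variables (R : realType) (n : nat).
Implicit Types (u v w : 'rV[R]_n) (a : R).

Lemma dotC u v : dot u v = dot v u.
Proof. by apply: eq_bigr => i _; rewrite mulrC. Qed.

Lemma dotDl u w v : dot (u + w) v = dot u v + dot w v.
Proof. by rewrite /dot -big_split; apply: eq_bigr => i _; rewrite !mxE mulrDl. Qed.

Lemma dotZl a u v : dot (a *: u) v = a * dot u v.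
Proof. by rewrite /dot mulr_sumr; apply: eq_bigr => i _; rewrite !mxE mulrA. Qed.

Lemma dotNl u v : dot (- u) v = - dot u v.
Proof. by rewrite -scaleN1r dotZl mulN1r. Qed.

Lemma dotDr u w v : dot v (u + w) = dot v u + dot v w.
Proof. by rewrite dotC dotDl !(dotC v). Qed.

Lemma dotZr a u v : dot v (a *: u) = a * dot v u.
Proof. by rewrite dotC dotZl dotC. Qed.

Lemma dotNr u v : dot v (- u) = - dot v u.
Proof. by rewrite dotC dotNl dotC. Qed.

Lemma dot_ge0 u : 0 <= dot u u.
Proof. by apply: sumr_ge0 => i _; rewrite -expr2 sqr_ge0. Qed.

Lemma dot_eq0 u v : dot u u = 0 -> dot u v = 0.
Proof.
move=> uu0; rewrite /dot big1 // => i _.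
have sq_ge0 j : xpredT j -> 0 <= u ord0 j ^+ 2 by move=> _; exact: sqr_ge0.
have /eqP : u ord0 i ^+ 2 = 0.
  exact: (psumr_eq0P sq_ge0).
by rewrite sqrf_eq0 => /eqP ->; rewrite mul0r.
Qed.

Lemma enorm_ge0 u : 0 <= enorm u.
Proof. exact: sqrtr_ge0. Qed.

Lemma enorm_sq u : enorm u ^+ 2 = dot u u.
Proof. by rewrite /enorm sqr_sqrtr // dot_ge0. Qed.

Lemma enorm0 : enorm (0 : 'rV[R]_n) = 0.
Proof. by rewrite /enorm /dot big1 ?sqrtr0 // => i _; rewrite mxE mul0r. Qed.

Lemma enormN u : enorm (- u) = enorm u.
Proof. by rewrite /enorm dotNl dotNr opprK. Qed.

Lemma enormZ a u : enorm (a *: u) = `|a| * enorm u.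
Proof. by rewrite /enorm dotZl dotZr mulrA -expr2 sqrtrM ?sqr_ge0 // sqrtr_sqr. Qed.

Lemma enorm_distC u v : enorm (u - v) = enorm (v - u).
Proof. by rewrite -enormN opprB. Qed.

Lemma cauchy_schwarz u v : dot u v <= enorm u * enorm v.
Proof.
have [u0|u0] := eqVneq (enorm u) 0.
  by rewrite dot_eq0 ?u0 ?mul0r // -enorm_sq u0 expr0n.
have [v0|v0] := eqVneq (enorm v) 0.
  by rewrite dotC dot_eq0 ?v0 ?mulr0 // -enorm_sq v0 expr0n.
set a := enorm u; set b := enorm v.
have a_gt0 : 0 < a by rewrite lt_def u0 enorm_ge0.
have b_gt0 : 0 < b by rewrite lt_def v0 enorm_ge0.
(* expand 0 <= |b u - a v|^2 = 2 a b (a b - <u,v>) *)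
have := dot_ge0 (b *: u - a *: v).
rewrite !(dotDl, dotDr, dotNl, dotNr, dotZl, dotZr) -!enorm_sq -/a -/b (dotC v u).
move=> expanded; rewrite -(ler_pM2l (mulr_gt0 a_gt0 b_gt0)).
by rewrite -subr_ge0; move: expanded; set t := dot u v; nra.
Qed.

Lemma enormD u v : enorm (u + v) <= enorm u + enorm v.
Proof.
rewrite -(ler_pXn2r (_ : 0 < 2)%N) ?nnegrE ?addr_ge0 ?enorm_ge0 //.
rewrite enorm_sq !(dotDl, dotDr) (dotC v u) -!enorm_sq.
have := cauchy_schwarz u v; nra.
Qed.

Lemma enorm_dist_triangle u v w : enorm (u - w) <= enorm (u - v) + enorm (v - w).
Proof. by have := enormD (u - v) (v - w); rewrite addrA subrK. Qed.

End Euclidean.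

Section MoreauEnvelopeBounds.
Variables (R : realType) (n : nat) (phi : 'rV[R]_n -> \bar R) (r : R).
Hypothesis r_gt0 : 0 < r.

(* Completing the square: a lower bound on the shifted proximal objective
   w |-> phi w - <v,w> + (2r)^-1 |x - r v - w|^2 bounds the tilted envelope. *)
Lemma moreau_tilt_lb (c : R) (x v : 'rV[R]_n) :
  (forall w, ((c + dot v w - (2 * r)^-1 * enorm (x - r *: v - w) ^+ 2)%:E
                <= phi w)%E) ->
  ((c - r / 2 * dot v v)%:E <= moreau phi r x - (dot v x)%:E)%E.
Proof.
move=> prox_lb; rewrite leeBrDr //; apply/ereal_infP => _ [w _ <-].
move: (prox_lb w); case: (phi w) => [p| |] //=; last by move=> _; rewrite leey.
rewrite -!EFinD !lee_fin -lerBlDr => /(le_trans _); apply.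
rewrite !enorm_sq !(dotDl, dotDr, dotNl, dotNr, dotZl, dotZr).
rewrite (dotC x v) (dotC w v) (dotC w x) le_eqVlt; apply/orP; left; apply/eqP.
by field; rewrite gt_eqF.
Qed.

(* Testing the envelope at m + r v with the point w := m. *)
Lemma moreau_tilt_ub (p : R) (m v : 'rV[R]_n) : phi m = p%:E ->
  (moreau phi r (m + r *: v) - (dot v (m + r *: v))%:E <=
     (p - dot v m - r / 2 * dot v v)%:E)%E.
Proof.
move=> phi_m; rewrite leeBlDr //.
apply: le_trans; first by apply: ereal_inf_lbound; exists m.
rewrite phi_m -!EFinD lee_fin !enorm_sq.
rewrite !(dotDl, dotDr, dotNl, dotNr, dotZl, dotZr) le_eqVlt; apply/orP; left.
by apply/eqP; field; rewrite gt_eqF.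
Qed.

End MoreauEnvelopeBounds.

(* The real-number estimate behind the far-field bound: a point w at distance
   s > gam from xb, whose value is controlled only by the quadratic
   minorization, still satisfies the proximal lower bound with margin
   gam^2 / (32 r), because the proximal term (2r)^-1 e^2 with e >= s/2
   dominates both the tilt (nv * s) and the minorization (rho/2 s^2). *)
Lemma far_field_estimate (R : realType) (r rho gam s e nv fb c p dw dxb : R) :
  0 < r -> 0 <= rho -> 8 * rho * r <= 1 -> 0 < gam -> gam < s -> s / 2 <= e ->
  r * nv <= gam / 32 -> 0 <= nv -> dw <= dxb + nv * s -> c <= fb - dxb ->
  fb - rho / 2 * s ^+ 2 <= p ->
  c + gam ^+ 2 / (32 * r) + dw - (2 * r)^-1 * e ^+ 2 <= p.
Proof.
move=> r_gt0 rho_ge0 rho_r gam_gt0 gam_s s_e r_nv nv_ge0 dw_le c_le p_ge.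
have s_gt0 : 0 < s by apply: lt_trans gam_s.
have gam2_s2 : gam ^+ 2 <= s ^+ 2 by rewrite ler_pXn2r ?nnegrE ?ltW.
have tilt_s : (r * nv) * s <= gam / 32 * s by rewrite ler_pM2r.
have gam_s_s2 : gam / 32 * s <= s ^+ 2 / 32 by rewrite expr2; nra.
have rho_s2 : (8 * rho * r) * s ^+ 2 <= s ^+ 2 by rewrite ler_piMl // sqr_ge0.
have s2_e2 : s ^+ 2 / 4 <= e ^+ 2.
  have : 0 <= s / 2 by rewrite divr_ge0 // ltW.
  by rewrite !expr2; nra.
suff : gam ^+ 2 / (32 * r) + nv * s + rho / 2 * s ^+ 2 <= (2 * r)^-1 * e ^+ 2.
  by lra.
rewrite ler_pdivlMl ?mulr_gt0 //.
have -> : 2 * r * (gam ^+ 2 / (32 * r) + nv * s + rho / 2 * s ^+ 2) =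
   gam ^+ 2 / 16 + 2 * ((r * nv) * s) + (8 * rho * r) * s ^+ 2 / 8.
  by field; rewrite gt_eqF.
lra.
Qed.

Section TiltedEnvelopeArgmin.
Variables (R : realType) (n : nat) (phi : 'rV[R]_n -> \bar R) (xb : 'rV[R]_n).
Variables (rho el gam r : R) (v m : 'rV[R]_n).
Hypothesis phi_neq_ninfty : forall x, phi x != -oo%E.
Hypothesis phi_xb_fin : phi xb \is a fin_num.
Hypothesis phi_quad_minor :
  forall x, (phi x >= phi xb - (rho / 2 * enorm (x - xb) ^+ 2)%:E)%E.
Hypothesis phi_lsc : forall x, enorm (x - xb) < el -> lsc_at phi x.
Hypotheses (gam_gt0 : 0 < gam) (r_gt0 : 0 < r) (rho_ge0 : 0 <= rho).
Hypothesis rho_r_small : 8 * rho * r <= 1.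
Hypothesis tilt_small : r * enorm v <= gam / 32.
Hypothesis argmin_v : tilt_argmin phi xb gam v = [set m]%classic.

Lemma argmin_v_m : tilt_argmin phi xb gam v m.
Proof. by rewrite argmin_v. Qed.

(* its value is finite, being bounded above by the finite value at xb *)
Lemma phi_m_fin : phi m \is a fin_num.
Proof.
have [_ m_min] := argmin_v_m.
have := m_min xb; rewrite subrr enorm0 => /(_ (ltW gam_gt0)).
move: (phi_neq_ninfty m) phi_xb_fin; rewrite fin_numE.
by case: (phi m) => [p| |] //; case: (phi xb).
Qed.

Definition tilt_min : R := fine (phi m) - dot v m.

Lemma tilt_min_lb w : enorm (w - xb) <= gam -> ((tilt_min + dot v w)%:E <= phi w)%E.
Proof.
move=> w_ball; have [_ m_min] := argmin_v_m.
move: (m_min w w_ball) (phi_neq_ninfty w); rewrite -(fineK phi_m_fin) /tilt_min.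
case: (phi w) => [p| |] //=; last by move=> *; rewrite leey.
by rewrite -!EFinB !lee_fin; lra.
Qed.

Definition prox_lb (x : 'rV[R]_n) (mu : R) (w : 'rV[R]_n) : Prop :=
  ((tilt_min + mu + dot v w - (2 * r)^-1 * enorm (x - r *: v - w) ^+ 2)%:E
     <= phi w)%E.

Lemma prox_lb_mono x mu mu' w : mu' <= mu -> prox_lb x mu w -> prox_lb x mu' w.
Proof. by move=> mu'_le; apply: le_trans; rewrite lee_fin; lra. Qed.

Lemma prox_term_ge0 x w : 0 <= (2 * r)^-1 * enorm (x - r *: v - w) ^+ 2.
Proof. by rewrite mulr_ge0 ?sqr_ge0 // invr_ge0 mulr_ge0 // ltW. Qed.

(* inside the ball the bound comes from minimality of m alone *)
Lemma prox_lb_ball x mu w : enorm (w - xb) <= gam ->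
  mu <= (2 * r)^-1 * enorm (x - r *: v - w) ^+ 2 -> prox_lb x mu w.
Proof.
by move=> w_ball mu_le; apply: le_trans (tilt_min_lb w_ball); rewrite lee_fin; lra.
Qed.

(* outside the ball the quadratic minorization takes over *)
Lemma prox_lb_far x w : enorm (x - r *: v - xb) <= gam / 2 ->
  gam < enorm (w - xb) -> prox_lb x (gam ^+ 2 / (32 * r)) w.
Proof.
move=> y_ball w_far; rewrite /prox_lb.
move: (phi_quad_minor w) (phi_neq_ninfty w); rewrite -(fineK phi_xb_fin).
case: (phi w) => [p + _| _ _| //]; last by rewrite leey.
rewrite -EFinB !lee_fin => p_ge.
apply: (far_field_estimate (rho := rho) (s := enorm (w - xb)) (nv := enorm v)
  (fb := fine (phi xb)) (dxb := dot v xb)) => //.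
- by have := enorm_dist_triangle w (x - r *: v) xb; rewrite (enorm_distC w (x - r *: v)); lra.
- exact: enorm_ge0.
- have -> : dot v w = dot v (w - xb) + dot v xb by rewrite -dotDr subrK.
  by have := cauchy_schwarz v (w - xb); lra.
- have := tilt_min_lb (w := xb); rewrite subrr enorm0 -(fineK phi_xb_fin) lee_fin.
  by move=> /(_ (ltW gam_gt0)); lra.
Qed.

Lemma prox_lb_uniform x w : enorm (x - r *: v - xb) <= gam / 2 -> prox_lb x 0 w.
Proof.
move=> y_ball; have [w_ball|w_far] := leP (enorm (w - xb)) gam.
  by apply: prox_lb_ball w_ball _; exact: prox_term_ge0.
apply: (prox_lb_mono _ (prox_lb_far y_ball w_far)).
by rewrite divr_ge0 ?sqr_ge0 // ltW // mulr_gt0.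
Qed.

(* uniqueness of m: any other point of the ball is strictly worse *)
Lemma tilt_strict_gap y : enorm (y - xb) <= gam -> y != m ->
  exists2 eta, 0 < eta & ((tilt_min + dot v y + eta)%:E < phi y)%E.
Proof.
move=> y_ball y_ne_m.
have y_worse : ((tilt_min + dot v y)%:E < phi y)%E.
  rewrite ltNge; apply: contra y_ne_m => y_le; apply/eqP.
  suff : tilt_argmin phi xb gam v y by rewrite argmin_v.
  split => // z z_ball; move: y_le (phi_neq_ninfty y) (tilt_min_lb z_ball).
  case: (phi y) => [p| |] // p_le _; case: (phi z) => [q| |] // q_ge; last by rewrite /= leey.
  by rewrite -!EFinB !lee_fin; move: p_le q_ge; rewrite !lee_fin; lra.
move: y_worse (phi_neq_ninfty y); case: (phi y) => [p| |] // p_gt _.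
  exists ((p - (tilt_min + dot v y)) / 2); rewrite lte_fin in p_gt.
    by rewrite divr_gt0 // subr_gt0.
  by rewrite lte_fin; lra.
by exists 1; rewrite ?ltey.
Qed.

(* near y := x - r v, lower semicontinuity transports the gap at y *)
Lemma prox_lb_near x eta k w : 0 < eta ->
  ((tilt_min + dot v (x - r *: v) + eta)%:E < phi w)%E ->
  enorm (w - (x - r *: v)) <= k -> enorm v * k <= eta / 2 ->
  prox_lb x (eta / 2) w.
Proof.
move=> eta_gt0 /ltW; rewrite /prox_lb => phi_w_ge wy_le tilt_le.
apply: le_trans phi_w_ge; rewrite lee_fin.
have := prox_term_ge0 x w.
have -> : dot v w = dot v (w - (x - r *: v)) + dot v (x - r *: v).
  by rewrite -dotDr subrK.
have := cauchy_schwarz v (w - (x - r *: v)).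
have : enorm v * enorm (w - (x - r *: v)) <= enorm v * k.
  by rewrite ler_wpM2l ?enorm_ge0.
lra.
Qed.

Lemma prox_lb_strict x : enorm (x - r *: v - xb) < el ->
  enorm (x - r *: v - xb) <= gam / 2 -> x - r *: v != m ->
  exists2 mu, 0 < mu & forall w, prox_lb x mu w.
Proof.
have half_gam : gam / 2 <= gam by move: gam_gt0; lra.
move=> y_el y_ball y_ne_m; set y := x - r *: v in y_el y_ball y_ne_m *.
have y_gam : enorm (y - xb) <= gam := le_trans y_ball half_gam.
have [eta eta_gt0 gap_y] := tilt_strict_gap y_gam y_ne_m.
have [del [del_gt0 near_y]] := phi_lsc y_el gap_y.
(* radius on which the tilt varies by at most eta / 2 *)
set k := eta / (2 * (enorm v + 1)).
have nv1_gt0 : 0 < enorm v + 1 by have := enorm_ge0 v; lra.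
have k_gt0 : 0 < k by rewrite divr_gt0 // mulr_gt0.
have tilt_k : enorm v * k <= eta / 2.
  apply: le_trans (_ : (enorm v + 1) * k <= _); first by rewrite ler_pM2r //; lra.
  by rewrite le_eqVlt; apply/orP; left; apply/eqP; rewrite /k; field; lra.
set del' := Order.min del k.
have del'_gt0 : 0 < del' by rewrite lt_min del_gt0 k_gt0.
exists (Order.min (eta / 2) (Order.min (del' ^+ 2 / (2 * r)) (gam ^+ 2 / (32 * r)))).
  by rewrite !lt_min !divr_gt0 ?exprn_gt0 ?mulr_gt0.
move=> w; have [w_near|w_off] := ltP (enorm (w - y)) del'.
  apply: (prox_lb_mono _ (prox_lb_near eta_gt0 _ (ltW _) tilt_k)).
  - by rewrite ge_min lexx.
  - by apply: near_y; apply: lt_le_trans w_near _; rewrite ge_min lexx.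
  - by apply: lt_le_trans w_near _; rewrite ge_min lexx orbT.
have [w_ball|w_far] := leP (enorm (w - xb)) gam.
  apply: prox_lb_ball w_ball _; rewrite ge_min; apply/orP; right.
  have inv2r_ge0 : 0 <= (2 * r)^-1 by rewrite invr_ge0 mulr_ge0 // ltW.
  rewrite ge_min; apply/orP; left; rewrite mulrC ler_wpM2l //.
  by rewrite ler_pXn2r ?nnegrE ?enorm_ge0 ?(ltW del'_gt0) // enorm_distC.
apply: (prox_lb_mono _ (prox_lb_far y_ball w_far)).
by rewrite !ge_min lexx !orbT.
Qed.

Lemma moreau_tilt_argmin g' :
  (forall x, enorm (x - xb) <= g' ->
     enorm (x - r *: v - xb) < el /\ enorm (x - r *: v - xb) <= gam / 2) ->
  enorm (m + r *: v - xb) <= g' ->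
  tilt_argmin (moreau phi r) xb g' v = [set m + r *: v]%classic.
Proof.
move=> shift_good m_shift_ball.
have env_m : (moreau phi r (m + r *: v) - (dot v (m + r *: v))%:E <=
                (tilt_min - r / 2 * dot v v)%:E)%E.
  by rewrite /tilt_min; apply: moreau_tilt_ub; rewrite ?fineK ?phi_m_fin.
have env_lb x mu : (forall w, prox_lb x mu w) ->
    ((tilt_min + mu - r / 2 * dot v v)%:E <= moreau phi r x - (dot v x)%:E)%E.
  by move=> lb; apply: moreau_tilt_lb => // w; have := lb w; rewrite /prox_lb addrA.
apply/seteqP; split => x /=; last first.
  move=> ->; split => // z z_ball; apply: le_trans env_m _.
  have [_ y_ball] := shift_good z z_ball.
  by have := env_lb z 0 (fun w => prox_lb_uniform w y_ball); rewrite addr0.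
move=> [x_ball x_min]; apply/eqP; apply: contraT => x_ne.
have [y_el y_ball] := shift_good x x_ball.
have y_ne : x - r *: v != m by apply: contra x_ne => /eqP <-; rewrite subrK.
have [mu mu_gt0 lb] := prox_lb_strict y_el y_ball y_ne.
have := le_trans (env_lb x mu lb) (le_trans (x_min _ m_shift_ball) env_m).
by rewrite lee_fin; lra.
Qed.

End TiltedEnvelopeArgmin.

Lemma lipschitz_shift (R : realType) (n : nat) (kappa r : R) (m1 m2 v1 v2 : 'rV[R]_n) :
  0 <= r -> enorm (m1 - m2) <= kappa * enorm (v1 - v2) ->
  enorm (m1 + r *: v1 - (m2 + r *: v2)) <= (kappa + r) * enorm (v1 - v2).
Proof.
move=> r_ge0 m_lip.
have -> : m1 + r *: v1 - (m2 + r *: v2) = (m1 - m2) + r *: (v1 - v2).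
  by rewrite scalerBr opprD addrACA.
apply: (le_trans (enormD _ _)); rewrite enormZ ger0_norm //; lra.
Qed.

Lemma tilt_argmin_center (R : realType) (n : nat) (phi : 'rV[R]_n -> \bar R)
    (xb : 'rV[R]_n) (g : R) (mt : 'rV[R]_n -> 'rV[R]_n) :
  tilt_argmin phi xb g 0 = [set mt 0]%classic ->
  tilt_argmin phi xb g 0 = [set xb]%classic -> mt 0 = xb.
Proof. by move=> -> center; have : [set xb]%classic xb by []; rewrite -center. Qed.

(* Tilt stability of the Moreau envelope for one fixed r with 8 rho r <= 1.
   On the ball B_g'(xb) with g' := min(gam, el) / 4 and for tilts |v| < d',
   the shift r v is small enough for moreau_tilt_argmin to apply. *)
Lemma moreau_tilt_stable (R : realType) (n : nat) (phi : 'rV[R]_n -> \bar R)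
    (xb : 'rV[R]_n) (rho kappa el r : R) :
  (forall x, phi x != -oo%E) -> phi xb \is a fin_num ->
  (forall x, (phi x >= phi xb - (rho / 2 * enorm (x - xb) ^+ 2)%:E)%E) ->
  0 < el -> (forall x, enorm (x - xb) < el -> lsc_at phi x) ->
  0 <= rho -> 0 < kappa -> 0 < r -> 8 * rho * r <= 1 ->
  tilt_stable phi xb kappa -> tilt_stable (moreau phi r) xb (kappa + 2 * r).
Proof.
move=> phi_neq_ninfty phi_xb_fin phi_quad_minor el_gt0 phi_lsc rho_ge0 kappa_gt0
  r_gt0 rho_r_small [gam [gam_gt0 [d [d_gt0 [mt [mt_argmin [mt_lip argmin_0]]]]]]].
have norm0_lt e : 0 < e -> enorm (0 : 'rV[R]_n) < e by rewrite enorm0.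
have mt0 : mt 0 = xb by apply: tilt_argmin_center (mt_argmin 0 (norm0_lt _ d_gt0)) _.
set g' := Order.min gam el / 4.
have g'_gt0 : 0 < g' by rewrite divr_gt0 // lt_min gam_gt0 el_gt0.
have g'_gam : g' <= gam / 4 by rewrite ler_pM2r // ge_min lexx.
have g'_el : g' <= el / 4 by rewrite ler_pM2r // ge_min lexx orbT.
have kr_gt0 : 0 < kappa + 9 * r by lra.
set d' := Order.min d (g' / (kappa + 9 * r)).
have d'_gt0 : 0 < d' by rewrite lt_min d_gt0 divr_gt0.
have small_tilt v : enorm v < d' -> enorm v < d /\ (kappa + 9 * r) * enorm v <= g'.
  rewrite lt_min => /andP[v_d v_g]; split => //.
  by rewrite mulrC -ler_pdivlMr // ltW.
have argmin_env v : enorm v < d' ->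
    tilt_argmin (moreau phi r) xb g' v = [set mt v + r *: v]%classic.
  move=> /small_tilt [v_d v_g]; have nv_ge0 := enorm_ge0 v.
  have norm_rv : enorm (r *: v) = r * enorm v by rewrite enormZ ger0_norm // ltW.
  apply: (moreau_tilt_argmin (rho := rho) (el := el) (gam := gam)) => //.
  - by rewrite mulrC; nra.
  - exact: mt_argmin.
  - move=> x x_ball; have := enormD (x - xb) (- (r *: v)).
    by rewrite enormN norm_rv addrAC; split; nra.
  - have := mt_lip v 0 v_d (norm0_lt _ d_gt0); rewrite mt0 subr0.
    have := enormD (mt v - xb) (r *: v); rewrite norm_rv addrAC; nra.
exists g'; split => //; exists d'; split => //; exists (fun v => mt v + r *: v).
split; [exact: argmin_env | split].
- move=> v1 v2 /small_tilt [v1_d _] /small_tilt [v2_d _].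
  apply: (le_trans (lipschitz_shift (ltW r_gt0) (mt_lip v1 v2 v1_d v2_d))).
  by apply: ler_wpM2r; [exact: enorm_ge0 | lra].
- by have := argmin_env 0 (norm0_lt _ d'_gt0); rewrite scaler0 addr0 mt0.
Qed.

Theorem mainTheorem11 (R : realType) (n : nat) (phi : 'rV[R]_n -> \bar R)
    (xb : 'rV[R]_n) (rho kappa : R) :
  (forall x, phi x != -oo%E) ->
  cont_prox_regular phi xb 0 ->
  0 <= rho ->
  (forall x, (phi x >= phi xb - (rho / 2 * enorm (x - xb) ^+ 2)%:E)%E) ->
  0 < kappa ->
  tilt_stable phi xb kappa ->
  exists r0 : R, 0 < r0 /\
    forall r : R, 0 < r -> r < r0 -> tilt_stable (moreau phi r) xb (kappa + 2 * r).
Proof.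
move=> phi_neq_ninfty [phi_xb_fin _ [el [el_gt0 phi_lsc]] _ _] rho_ge0 phi_quad_minor
  kappa_gt0 tilt_phi.
have rho8_gt0 : 0 < 8 * rho + 1 by lra.
exists (1 / (8 * rho + 1)); split; first by rewrite divr_gt0.
move=> r r_gt0; rewrite ltr_pdivlMr // => r_small.
apply: (moreau_tilt_stable (rho := rho) (el := el)) => //; nra.
Qed.
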